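(* Let $n\ge 2$, let $A\in\mathbb{R}^{n\times n}$ be symmetric, let $B^a\in\mathbb{R}^{n\times n}$ be skew-symmetric and $B^s\in\mathbb{R}^{n\times n}$ symmetric, and let $K\ge 1$ be an integer such that $(B^s,A,B^a)$ satisfies the inhomogeneous Kalman rank condition of order $K$. Then there exist nonnegative integers $\alpha,\beta$ and a constant $c>0$ such that for every $\widehat U\in\mathbb{C}^n$: (i) for every real $\xi$ with $|\xi|\ge 1$, $$\sum_{k=0}^{K}|\xi|^{-2k}\,\big|B^s(i\xi A+B^a)^k\widehat U\big|^2\;\ge\; c\,|\xi|^{-2\alpha}|\widehat U|^2;$$ (ii) for every real $\xi$ with $0<|\xi|\le 1$, $$\sum_{k=0}^{K}\big|B^s(i\xi A+B^a)^k\widehat U\big|^2\;\ge\; c\,|\xi|^{2\beta}|\widehat U|^2.$$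
   Context: $|\cdot|$ denotes the Hermitian norm on $\mathbb{C}^n$. Inhomogeneous Kalman rank condition of order $K$: for every real $\xi\neq 0$, the $(K+1)n\times n$ complex matrix obtained by stacking the blocks $B^s,\;B^s(i\xi A+B^a),\;B^s(i\xi A+B^a)^2,\;\dots,\;B^s(i\xi A+B^a)^K$ on top of each other has rank $n$. *)

From HB Require Import structures.
From mathcomp Require Import all_boot all_order all_algebra.
From mathcomp Require Import complex.
From mathcomp Require Import reals.
Set Implicit Arguments. Unset Strict Implicit. Unset Printing Implicit Defensive.
Import Order.TTheory GRing.Theory Num.Theory.
Local Open Scope ring_scope.
Local Open Scope complex_scope.

Definition cplx_mx (R : rcfType) (m p : nat) (M : 'M[R]_(m, p)) : 'M[R[i]]_(m, p) :=
  map_mx (fun x => x%:C) M.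

Definition symb_mx (R : rcfType) (n : nat) (A Ba : 'M[R]_n) (xi : R) : 'M[R[i]]_n :=
  ('i * xi%:C) *: cplx_mx A + cplx_mx Ba.

Definition kalman_mx (R : rcfType) (n : nat) (Bs A Ba : 'M[R]_n) (K : nat) (xi : R)
  : 'M[R[i]]_(\sum_(k < K.+1) n, n) :=
  \mxcol_(k < K.+1) (cplx_mx Bs *m symb_mx A Ba xi ^+ k).

Definition kalman_rank_cond (R : rcfType) (n : nat) (Bs A Ba : 'M[R]_n) (K : nat) : Prop :=
  forall xi : R, xi != 0 -> \rank (kalman_mx Bs A Ba K xi) = n.

Definition hnorm2 (R : rcfType) (n : nat) (v : 'cV[R[i]]_n) : R :=
  \sum_(j < n) ((@complex.Re R (v j 0)) ^+ 2 + (@complex.Im R (v j 0)) ^+ 2).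

From HB Require Import structures.
From mathcomp Require Import all_boot all_order all_algebra.
From mathcomp Require Import complex.
From mathcomp Require Import reals.
From mathcomp Require Import ring lra.
From mathcomp Require Import topology normedtype derive realfun.
Set Implicit Arguments. Unset Strict Implicit. Unset Printing Implicit Defensive.
Import Order.TTheory GRing.Theory Num.Theory.
Import ComplexField.Normc.
Import numFieldNormedType.Exports.
Local Open Scope ring_scope.
Local Open Scope complex_scope.

(* For |xi| >= 1 write t = 1/xi, for |xi| <= 1 write t = xi: in both regimes the
   blocks B^s (i xi A + B^a)^k become, up to the factor xi^k, the blocks
   M_k(t) = B (X0 + t X1)^k of a linear pencil, and the Kalman rank condition
   says that they have no common kernel for 0 < |t| <= 1.  The Gram matrix
   G(t) = sum_k M_k(t)^* M_k(t) is then invertible there, and Cramer's rule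
   det G(t) U = adj G(t) sum_k M_k(t)^* M_k(t) U gives
   |det G(t)|^2 |U|^2 <= C sum_k |M_k(t) U|^2, with C uniform on |t| <= 1
   because the entries of adj G(t) M_k(t)^* are polynomials in t.  Finally
   |det G(t)|^2 is a real polynomial in t whose only possible zero in [-1, 1]
   is 0, hence it is bounded below by c |t|^m there. *)

Lemma normc_ge0 (R : rcfType) (z : R[i]) : 0 <= normc z.
Proof. by case: z => a b; rewrite sqrtr_ge0. Qed.

Lemma sqr_normc_ReIm (R : rcfType) (z : R[i]) :
  normc z ^+ 2 = complex.Re z ^+ 2 + complex.Im z ^+ 2.
Proof. by case: z => a b /=; rewrite sqr_sqrtr // addr_ge0 // sqr_ge0. Qed.

Lemma normc_real (R : rcfType) (t : R) : normc t%:C = `|t|.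
Proof. by rewrite /= expr0n /= addr0 sqrtr_sqr. Qed.

Lemma normcX (R : rcfType) (z : R[i]) k : normc (z ^+ k) = normc z ^+ k.
Proof. by elim: k => [|k IHk]; rewrite ?normc1 // !exprS normcM IHk. Qed.

Lemma normc_sum_le (R : rcfType) (I : finType) (F : I -> R[i]) :
  normc (\sum_i F i) <= \sum_i normc (F i).
Proof.
elim/big_rec2: _ => [|i y z _ Hy]; first by rewrite normc0.
exact: le_trans (le_normcD _ _) (lerD (lexx _) Hy).
Qed.

Lemma sqr_sum_le (R : realFieldType) (I : finType) (x : I -> R) :
  (\sum_i x i) ^+ 2 <= #|I|%:R * \sum_i x i ^+ 2.
Proof.
have cross : (\sum_i x i) ^+ 2 *+ 2 <= \sum_i \sum_j (x i ^+ 2 + x j ^+ 2).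
  rewrite expr2 mulr_suml -sumrMnl; apply: ler_sum => i _.
  rewrite mulr_sumr -sumrMnl; apply: ler_sum => j _.
  have := sqr_ge0 (x i - x j); rewrite sqrrB; lra.
suff total : \sum_i \sum_j (x i ^+ 2 + x j ^+ 2) = (#|I|%:R * \sum_i x i ^+ 2) *+ 2.
  by rewrite total lerMn2r in cross.
under eq_bigr => i _ do rewrite big_split /= sumr_const.
rewrite big_split /= sumr_const sumrMnl mulr2n mulr_natl.
by rewrite (eq_card (_ : xpredT =i I)).
Qed.

Section HermitianNorm.
Variable R : rcfType.

Lemma hnorm2E m (v : 'cV[R[i]]_m) : hnorm2 v = \sum_j normc (v j 0) ^+ 2.
Proof. by apply: eq_bigr => j _; rewrite sqr_normc_ReIm. Qed.

Lemma hnorm2_ge0 m (v : 'cV[R[i]]_m) : 0 <= hnorm2 v.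
Proof. by rewrite hnorm2E sumr_ge0 // => j _; rewrite sqr_ge0. Qed.

Lemma hnorm2_eq0 m (v : 'cV[R[i]]_m) : hnorm2 v = 0 -> v = 0.
Proof.
rewrite hnorm2E => /eqP; rewrite psumr_eq0 => [/allP v0|j _]; last exact: sqr_ge0.
apply/matrixP => j k; rewrite ord1 mxE.
by have /v0 := mem_index_enum j; rewrite sqrf_eq0 => /eqP/eq0_normc.
Qed.

Lemma hnorm2Z m (a : R[i]) (v : 'cV[R[i]]_m) :
  hnorm2 (a *: v) = normc a ^+ 2 * hnorm2 v.
Proof. by rewrite !hnorm2E mulr_sumr; apply: eq_bigr => j _; rewrite mxE normcM exprMn. Qed.

Lemma hnorm2_sum_le m N (v : 'I_N -> 'cV[R[i]]_m) :
  hnorm2 (\sum_(k < N) v k) <= N%:R * \sum_(k < N) hnorm2 (v k).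
Proof.
rewrite hnorm2E; under [X in _ <= _ * X]eq_bigr => k _ do rewrite hnorm2E.
rewrite exchange_big mulr_sumr /=; apply: ler_sum => j _; rewrite summxE.
have sum_ge0 : 0 <= \sum_k normc ((v k) j 0) by apply: sumr_ge0 => k _; apply: normc_ge0.
apply: le_trans (lerXn2r 2 (normc_ge0 _) sum_ge0 (normc_sum_le _)) _.
by apply: le_trans (sqr_sum_le _) _; rewrite card_ord.
Qed.

Lemma hnorm2_mul_le m p (W : 'M[R[i]]_(m, p)) (v : 'cV[R[i]]_p) (C : R) :
  0 <= C -> (forall i j, normc (W i j) <= C) ->
  hnorm2 (W *m v) <= (m * p)%:R * C ^+ 2 * hnorm2 v.
Proof.
move=> C0 WC; rewrite !hnorm2E.
apply: le_trans (_ : _ <= \sum_(i < m) (p%:R * C ^+ 2 * \sum_j normc (v j 0) ^+ 2)) _.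
  apply: ler_sum => i _; rewrite mxE.
  have row_le : normc (\sum_j W i j * v j 0) <= C * \sum_j normc (v j 0).
    apply: le_trans (normc_sum_le _) _; rewrite mulr_sumr; apply: ler_sum => j _.
    by rewrite normcM ler_wpM2r ?normc_ge0.
  have sum_ge0 : 0 <= \sum_j normc (v j 0) by apply: sumr_ge0 => j _; apply: normc_ge0.
  apply: le_trans (lerXn2r 2 (normc_ge0 _) _ row_le) _; first by rewrite nnegrE mulr_ge0.
  rewrite exprMn (mulrC p%:R) -[C ^+ 2 * p%:R * _]mulrA.
  apply: ler_wpM2l; first exact: sqr_ge0.
  by apply: le_trans (sqr_sum_le _) _; rewrite card_ord.
by rewrite sumr_const card_ord -[_ *+ m]mulr_natl natrM !mulrA.
Qed.

End HermitianNorm.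

Lemma horner_real_morph (R : rcfType) (f : R[i] -> R) :
  f 0 = 0 -> {morph f : x y / x + y} -> (forall x r, f (x * r%:C) = f x * r) ->
  forall (p : {poly R[i]}) (t : R), f p.[t%:C] = (map_poly f p).[t].
Proof.
move=> f0 fD fM p t.
have size_fp : (size (map_poly f p) <= size p)%N.
  by apply/leq_sizeP => j /(nth_default 0) pj0; rewrite coef_map_id0 // pj0.
rewrite (horner_coef_wide _ (leqnn _)) (horner_coef_wide _ size_fp).
rewrite (big_morph f fD f0); apply: eq_bigr => j _.
by rewrite -rmorphXn fM coef_map_id0.
Qed.

Lemma Re_horner (R : rcfType) (p : {poly R[i]}) (t : R) :
  complex.Re p.[t%:C] = (map_poly (@complex.Re R) p).[t].
Proof.
by apply: horner_real_morph => [|x y|[a b] r]; rewrite ?raddfD //= mulr0 subr0.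
Qed.

Lemma Im_horner (R : rcfType) (p : {poly R[i]}) (t : R) :
  complex.Im p.[t%:C] = (map_poly (@complex.Im R) p).[t].
Proof.
by apply: horner_real_morph => [|x y|[a b] r]; rewrite ?raddfD //= mulr0 add0r.
Qed.

Lemma poly_family_bounded (R : rcfType) (I : finType) (P : I -> {poly R[i]}) :
  exists2 C : R, 0 <= C & forall t : R, `|t| <= 1 -> forall i, normc (P i).[t%:C] <= C.
Proof.
pose bound i := \sum_(l < size (P i)) normc (P i)`_l.
have bound_ge0 i : 0 <= bound i by apply: sumr_ge0 => l _; apply: normc_ge0.
exists (\sum_i bound i) => [|t t1 i]; first exact: sumr_ge0.
apply: le_trans (_ : bound i <= _); last by rewrite (bigD1 i) //= lerDl sumr_ge0.
rewrite horner_coef; apply: le_trans (normc_sum_le _) _; apply: ler_sum => l _.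
rewrite normcM normcX normc_real -[leRHS]mulr1 ler_wpM2l ?normc_ge0 //.
exact: exprn_ile1.
Qed.

Lemma poly_lower_bound (R : realType) (r : {poly R}) :
  (forall t : R, `|t| <= 1 -> t != 0 -> r.[t] != 0) ->
  exists (m : nat) (c : R), 0 < c /\ forall t : R, `|t| <= 1 -> c * `|t| ^+ m <= `|r.[t]|.
Proof.
move=> r_neq0.
have r0 : r != 0.
  apply/eqP => r0; have := r_neq0 1.
  by rewrite r0 horner0 eqxx normr1 lexx => /(_ isT (oner_neq0 _)).
have [m [s /implyP/(_ r0) s0 r_eq]] := multiplicity_XsubC r 0.
have s_neq0 (t : R) : `|t| <= 1 -> s.[t] != 0.
  move=> t1; have [-> //|t0] := eqVneq t 0.
  by apply: contraNneq (r_neq0 t t1 t0) => st0; rewrite r_eq hornerM st0 mul0r.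
have cont_s : continuous (fun t : R => `|s.[t]|).
  by move=> t; apply: continuous_comp; [exact: continuous_horner | exact: norm_continuous].
have [t0 t0_in min_t0] := @EVT_min R (fun t => `|s.[t]|) (-1) 1 (le_trans (lerN10 _) ler01)
  (continuous_subspaceT cont_s).
have in_unit (t : R) : (t \in `[-1, 1]) = (`|t| <= 1) by rewrite in_itv /= ler_norml.
exists m, `|s.[t0]|; split; first by rewrite normr_gt0 s_neq0 -?in_unit.
move=> t t1; rewrite r_eq polyC0 subr0 hornerM hornerXn normrM normrX.
by apply: ler_wpM2r; [rewrite exprn_ge0 | rewrite min_t0 ?in_unit].
Qed.

Definition conjTmx (R : rcfType) m p (M : 'M[R[i]]_(m, p)) : 'M[R[i]]_(p, m) :=
  (map_mx conjc M)^T.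

Lemma hnorm2_conjTmx (R : rcfType) m (v : 'cV[R[i]]_m) :
  (hnorm2 v)%:C = (conjTmx v *m v) 0 0.
Proof.
rewrite hnorm2E rmorph_sum mxE; apply: eq_bigr => j _; rewrite !mxE sqr_normc_ReIm.
by case: (v j 0) => a b; congr (_ +i* _); rewrite /=; ring.
Qed.

Section Gram.
Variables (R : rcfType) (n K : nat) (B X0 X1 : 'M[R[i]]_n).

Definition pencil (t : R) (k : nat) : 'M[R[i]]_n := B *m (X0 + t%:C *: X1) ^+ k.

Definition gram (t : R) : 'M[R[i]]_n :=
  \sum_(k < K.+1) conjTmx (pencil t k) *m pencil t k.

Lemma gram_form (t : R) (U : 'cV[R[i]]_n) :
  (conjTmx U *m gram t *m U) 0 0 = (\sum_(k < K.+1) hnorm2 (pencil t k *m U))%:C.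
Proof.
rewrite mulmx_sumr mulmx_suml summxE rmorph_sum; apply: eq_bigr => k _ /=.
by rewrite hnorm2_conjTmx /conjTmx !map_mxM !trmx_mul !mulmxA.
Qed.

Lemma det_gram_neq0 (t : R) :
  (forall U : 'cV[R[i]]_n, (forall k : 'I_K.+1, pencil t k *m U = 0) -> U = 0) ->
  \det (gram t) != 0.
Proof.
move=> ker0; apply/negP; rewrite -det_tr => /det0P [v v_neq0 vG].
have GvT : gram t *m v^T = 0 by rewrite -[gram t]trmxK -trmx_mul vG trmx0.
have : (\sum_(k < K.+1) hnorm2 (pencil t k *m v^T))%:C = 0%:C.
  by rewrite -(gram_form t v^T) -mulmxA GvT mulmx0 mxE.
move=> /complexI sum0.
suff vT0 : v^T = 0 by move: v_neq0; rewrite -[v]trmxK vT0 trmx0 eqxx.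
apply: ker0 => k; apply: hnorm2_eq0.
by apply: (psumr_eq0P _ sum0) => // j _; apply: hnorm2_ge0.
Qed.

Lemma det_gram_scale (t : R) (U : 'cV[R[i]]_n) :
  \det (gram t) *: U =
  \sum_(k < K.+1) (\adj (gram t) *m conjTmx (pencil t k)) *m (pencil t k *m U).
Proof.
rewrite -mul_scalar_mx -mul_adj_mx {2}/gram mulmx_sumr mulmx_suml.
by apply: eq_bigr => k _; rewrite !mulmxA.
Qed.

Lemma det_gram_bound (t : R) (U : 'cV[R[i]]_n) (C : R) : 0 <= C ->
  (forall (k : 'I_K.+1) i j, normc ((\adj (gram t) *m conjTmx (pencil t k)) i j) <= C) ->
  normc (\det (gram t)) ^+ 2 * hnorm2 U <=
  K.+1%:R * ((n * n)%:R * C ^+ 2) * \sum_(k < K.+1) hnorm2 (pencil t k *m U).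
Proof.
move=> C0 adjC; rewrite -hnorm2Z det_gram_scale.
apply: le_trans (hnorm2_sum_le _) _; rewrite -mulrA ler_wpM2l // mulr_sumr.
by apply: ler_sum => k _; apply: hnorm2_mul_le.
Qed.

Definition pencil_poly (k : nat) : 'M[{poly R[i]}]_n :=
  map_mx polyC B *m (map_mx polyC X0 + 'X *: map_mx polyC X1) ^+ k.

Definition conjTpoly m p (P : 'M[{poly R[i]}]_(m, p)) : 'M[{poly R[i]}]_(p, m) :=
  (map_mx (map_poly conjc) P)^T.

Definition gram_poly : 'M[{poly R[i]}]_n :=
  \sum_(k < K.+1) conjTpoly (pencil_poly k) *m pencil_poly k.

Lemma map_horner_polyC m p (x : R[i]) (M : 'M[R[i]]_(m, p)) :
  map_mx (horner_eval x) (map_mx polyC M) = M.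
Proof. by apply/matrixP => i j; rewrite !mxE /horner_eval hornerC. Qed.

Lemma map_horner_pencil_poly (t : R) k :
  map_mx (horner_eval t%:C) (pencil_poly k) = pencil t k.
Proof.
rewrite map_mxM rmorphXn /= map_mxD map_mxZ !map_horner_polyC.
by rewrite /= /horner_eval hornerX.
Qed.

Lemma map_horner_conjTpoly m p (t : R) (P : 'M[{poly R[i]}]_(m, p)) :
  map_mx (horner_eval t%:C) (conjTpoly P) = conjTmx (map_mx (horner_eval t%:C) P).
Proof.
apply/matrixP => i j; rewrite !mxE /horner_eval.
by rewrite -[in LHS](conjc_real t) (horner_map (@conjc R)).
Qed.

Lemma map_horner_gram_poly (t : R) : map_mx (horner_eval t%:C) gram_poly = gram t.
Proof.
rewrite map_mx_sum; apply: eq_bigr => k _.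
by rewrite map_mxM map_horner_conjTpoly map_horner_pencil_poly.
Qed.

Lemma horner_det_gram_poly (t : R) : (\det gram_poly).[t%:C] = \det (gram t).
Proof. by rewrite -map_horner_gram_poly det_map_mx. Qed.

Lemma adj_gram_pencil_bounded : exists2 C : R, 0 <= C &
  forall t : R, `|t| <= 1 -> forall (k : 'I_K.+1) i j,
    normc ((\adj (gram t) *m conjTmx (pencil t k)) i j) <= C.
Proof.
pose W (kij : 'I_K.+1 * 'I_n * 'I_n) :=
  (\adj gram_poly *m conjTpoly (pencil_poly kij.1.1)) kij.1.2 kij.2.
have [C C0 WC] := poly_family_bounded W.
exists C => // t t1 k i j; have := WC t t1 (k, i, j).
have entry (P : 'M[{poly R[i]}]_n) : (P i j).[t%:C] = map_mx (horner_eval t%:C) P i j.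
  by rewrite mxE.
rewrite /W /= entry map_mxM map_mx_adj map_horner_gram_poly.
by rewrite map_horner_conjTpoly map_horner_pencil_poly.
Qed.

End Gram.

Section Observability.
Variables (R : realType) (n K : nat) (B X0 X1 : 'M[R[i]]_n).

Hypothesis pencil_ker0 : forall t : R, `|t| <= 1 -> t != 0 ->
  forall U : 'cV[R[i]]_n, (forall k : 'I_K.+1, pencil B X0 X1 t k *m U = 0) -> U = 0.

Lemma det_gram_lower_bound : exists (m : nat) (c : R), 0 < c /\
  forall t : R, `|t| <= 1 -> c * `|t| ^+ m <= normc (\det (gram K B X0 X1 t)) ^+ 2.
Proof.
pose d := \det (gram_poly K B X0 X1).
pose r := map_poly (@complex.Re R) d ^+ 2 + map_poly (@complex.Im R) d ^+ 2.
have rE (t : R) : r.[t] = normc (\det (gram K B X0 X1 t)) ^+ 2.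
  by rewrite hornerD !horner_exp -Re_horner -Im_horner horner_det_gram_poly sqr_normc_ReIm.
have r_neq0 (t : R) : `|t| <= 1 -> t != 0 -> r.[t] != 0.
  move=> t1 t0; rewrite rE sqrf_eq0.
  by apply: contraNneq (det_gram_neq0 (pencil_ker0 t1 t0)) => /eq0_normc ->.
have [m [c [c0 r_ge]]] := poly_lower_bound r_neq0.
by exists m, c; split => // t t1; rewrite -rE -[r.[t]]ger0_norm ?r_ge // rE sqr_ge0.
Qed.

Lemma pencil_observability : exists (m : nat) (c : R), 0 < c /\
  forall t : R, `|t| <= 1 -> forall U : 'cV[R[i]]_n,
    c * `|t| ^+ m * hnorm2 U <= \sum_(k < K.+1) hnorm2 (pencil B X0 X1 t k *m U).
Proof.
have [m [c [c0 det_ge]]] := det_gram_lower_bound.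
have [C C0 adjC] := adj_gram_pencil_bounded K B X0 X1.
pose D := K.+1%:R * ((n * n)%:R * C ^+ 2) + 1.
have D0 : 0 < D by rewrite ltr_pwDr // !mulr_ge0 // sqr_ge0.
exists m, (c / D); split=> [|t t1 U]; first by rewrite divr_gt0.
rewrite -(ler_pM2l D0) !mulrA [D * c]mulrC mulfK ?gt_eqF //.
apply: le_trans (_ : normc (\det (gram K B X0 X1 t)) ^+ 2 * hnorm2 U <= _).
  by rewrite ler_wpM2r ?hnorm2_ge0 ?det_ge.
apply: le_trans (det_gram_bound _ C0 (adjC t t1)) _.
by rewrite ler_wpM2r ?lerDl // sumr_ge0 // => k _; apply: hnorm2_ge0.
Qed.

End Observability.

Lemma kalman_blocks_eq0 (R : rcfType) n (Bs A Ba : 'M[R]_n) K (xi : R) (U : 'cV[R[i]]_n) :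
  kalman_rank_cond Bs A Ba K -> xi != 0 ->
  (forall k : 'I_K.+1, cplx_mx Bs *m symb_mx A Ba xi ^+ k *m U = 0) -> U = 0.
Proof.
move=> rank_n xi0 blocks0.
have /row_fullP [X XK] : row_full (kalman_mx Bs A Ba K xi) by rewrite /row_full rank_n.
have KU : kalman_mx Bs A Ba K xi *m U = 0.
  rewrite mxcol_mul -(mxcol0 (p_ := fun=> n) 1).
  by apply: eq_mxcol => k; apply: blocks0.
by rewrite -(mul1mx U) -XK -mulmxA KU mulmx0.
Qed.

Lemma symb_mx_pencil_low (R : rcfType) n (Bs A Ba : 'M[R]_n) (xi : R) k :
  cplx_mx Bs *m symb_mx A Ba xi ^+ k =
  pencil (cplx_mx Bs) (cplx_mx Ba) ('i *: cplx_mx A) xi k.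
Proof. by rewrite /symb_mx /pencil addrC scalerA mulrC. Qed.

Lemma exprZmx (C : comNzRingType) n (a : C) (M : 'M[C]_n) k :
  (a *: M) ^+ k = a ^+ k *: M ^+ k.
Proof.
elim: k => [|k IHk]; first by rewrite !expr0 scale1r.
by rewrite !exprS -!mulmxE IHk -scalemxAr -scalemxAl scalerA mulrC.
Qed.

Lemma symb_mx_pencil_high (R : rcfType) n (Bs A Ba : 'M[R]_n) (xi : R) k : xi != 0 ->
  cplx_mx Bs *m symb_mx A Ba xi ^+ k =
  xi%:C ^+ k *: pencil (cplx_mx Bs) ('i *: cplx_mx A) (cplx_mx Ba) xi^-1 k.
Proof.
move=> xi0.
have -> : symb_mx A Ba xi = xi%:C *: ('i *: cplx_mx A + xi^-1%:C *: cplx_mx Ba).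
  by rewrite /symb_mx scalerDr !scalerA -rmorphM mulfV // rmorph1 scale1r mulrC.
by rewrite exprZmx scalemxAr.
Qed.

Section KalmanEstimates.
Variables (R : realType) (n : nat) (A Ba Bs : 'M[R]_n) (K : nat).
Hypothesis rank_n : kalman_rank_cond Bs A Ba K.

Lemma kalman_high_freq : exists (alpha : nat) (c : R), 0 < c /\
  forall (U : 'cV[R[i]]_n) (xi : R), 1 <= `|xi| ->
    c * `|xi| ^- (2 * alpha) * hnorm2 U <=
    \sum_(k < K.+1) `|xi| ^- (2 * k) * hnorm2 (cplx_mx Bs *m symb_mx A Ba xi ^+ k *m U).
Proof.
have [|m [c [c0 obs]]] := @pencil_observability R n K (cplx_mx Bs) ('i *: cplx_mx A) (cplx_mx Ba).
  move=> t _ t0 U blocks0; apply: (kalman_blocks_eq0 rank_n (invr_neq0 t0)) => k.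
  by rewrite symb_mx_pencil_high ?invr_neq0 // invrK -scalemxAl blocks0 scaler0.
exists m, c; split=> // U xi xi1.
have xi0 : xi != 0 by rewrite -normr_gt0 (lt_le_trans ltr01 xi1).
have inv_xi1 : `|xi^-1| <= 1 by rewrite normrV ?unitfE // invf_le1 ?(lt_le_trans ltr01).
under eq_bigr => k _.
  rewrite symb_mx_pencil_high // -scalemxAl hnorm2Z normcX normc_real -exprM mulnC.
  rewrite mulKf ?expf_neq0 ?normr_eq0 //.
  over.
apply: le_trans (obs _ inv_xi1 U); rewrite ler_wpM2r ?hnorm2_ge0 // ler_wpM2l ?(ltW c0) //.
rewrite -exprVn -normrV ?unitfE //.
by apply: ler_wiXn2l => //; rewrite leq_pmull.
Qed.

Lemma kalman_low_freq : exists (beta : nat) (c : R), 0 < c /\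
  forall (U : 'cV[R[i]]_n) (xi : R), 0 < `|xi| <= 1 ->
    c * `|xi| ^+ (2 * beta) * hnorm2 U <=
    \sum_(k < K.+1) hnorm2 (cplx_mx Bs *m symb_mx A Ba xi ^+ k *m U).
Proof.
have [|m [c [c0 obs]]] := @pencil_observability R n K (cplx_mx Bs) (cplx_mx Ba) ('i *: cplx_mx A).
  move=> t _ t0 U blocks0; apply: (kalman_blocks_eq0 rank_n t0) => k.
  by rewrite symb_mx_pencil_low blocks0.
exists m, c; split=> // U xi /andP[_ xi1].
under eq_bigr => k _ do rewrite symb_mx_pencil_low.
apply: le_trans (obs _ xi1 U); rewrite ler_wpM2r ?hnorm2_ge0 // ler_wpM2l ?(ltW c0) //.
by apply: ler_wiXn2l => //; rewrite leq_pmull.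
Qed.

End KalmanEstimates.

Unset Implicit Arguments.

Theorem mainTheorem1 (R : realType) (n : nat) (A Ba Bs : 'M[R]_n) (K : nat) :
  (2 <= n)%N ->
  A^T = A -> Ba^T = - Ba -> Bs^T = Bs ->
  (1 <= K)%N ->
  kalman_rank_cond Bs A Ba K ->
  exists (alpha beta : nat) (c : R), 0 < c /\
    forall U : 'cV[R[i]]_n,
      (forall xi : R, 1 <= `|xi| ->
         c * `|xi| ^- (2 * alpha) * hnorm2 U <=
         \sum_(k < K.+1) `|xi| ^- (2 * k) *
            hnorm2 (cplx_mx Bs *m symb_mx A Ba xi ^+ k *m U)) /\
      (forall xi : R, 0 < `|xi| <= 1 ->
         c * `|xi| ^+ (2 * beta) * hnorm2 U <=
         \sum_(k < K.+1) hnorm2 (cplx_mx Bs *m symb_mx A Ba xi ^+ k *m U)).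
Proof.
move=> _ _ _ _ _ rank_n.
have [alpha [c1 [c1_gt0 high]]] := kalman_high_freq rank_n.
have [beta [c2 [c2_gt0 low]]] := kalman_low_freq rank_n.
exists alpha, beta, (Num.min c1 c2); split=> [|U]; first by rewrite lt_min c1_gt0 c2_gt0.
split=> xi xi_range; [apply: le_trans (high U xi xi_range) | apply: le_trans (low U xi xi_range)].
  by rewrite !ler_wpM2r ?hnorm2_ge0 ?invr_ge0 ?exprn_ge0 ?ge_min ?lexx.
by rewrite !ler_wpM2r ?hnorm2_ge0 ?exprn_ge0 ?ge_min ?lexx ?orbT.
Qed.
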